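(* Let $\mathcal{X}_V,\mathcal{X}_L$ be finite sets, $\mathcal{P}_M$ a joint distribution on $\mathcal{X}_V\times\mathcal{X}_L$ with everywhere positive marginals $\mathcal{P}_V,\mathcal{P}_L$, and let $\mathcal{P}_M(x_v|x_l)=\mathcal{P}_M(x_v,x_l)/\mathcal{P}_L(x_l)$. Define the text-induced joint distribution on $\mathcal{X}_V\times\mathcal{X}_V$ by $\mathcal{P}_T(x_v,x_v')=\mathbb{E}_{x_l\sim\mathcal{P}_L}\mathcal{P}_M(x_v|x_l)\mathcal{P}_M(x_v'|x_l)$, and the uni-modal contrastive loss for $f_V:\mathcal{X}_V\to\mathbb{R}^k$, $$\mathcal{L}^{\rm uni}_{\rm SCL}(f_V)=-2\,\mathbb{E}_{(x_v,x_v^+)\sim\mathcal{P}_T}f_V(x_v)^\top f_V(x_v^+)+\mathbb{E}_{x_v\sim\mathcal{P}_V,\,x_v^-\sim\mathcal{P}_V}\big(f_V(x_v)^\top f_V(x_v^-)\big)^2$$ with $x_v^-$ independent of $x_v$. Let $f_V^*$ be an optimal visual encoder of the multi-modal loss $$\mathcal{L}_{\rm SCL}(f_V,f_L)=-2\,\mathbb{E}_{(x_v,x_l)\sim\mathcal{P}_M}f_V(x_v)^\top f_L(x_l)+\mathbb{E}_{x_v^-\sim\mathcal{P}_V,\,x_l^-\sim\mathcal{P}_L}\big(f_V(x_v^-)^\top f_L(x_l^-)\big)^2$$ (minimized over all functions $f_V:\mathcal{X}_V\to\mathbb{R}^k$, $f_L:\mathcal{X}_L\to\mathbb{R}^k$),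 of the form $f^*_V(x_v)=\mathcal{P}_V(x_v)^{-1/2}(U^k_{x_v}DR)^\top$ where $U^k$ contains the top-$k$ left singular vectors of $\tilde P_M$, $(\tilde P_M)_{x_v,x_l}=\mathcal{P}_M(x_v,x_l)/\sqrt{\mathcal{P}_V(x_v)\mathcal{P}_L(x_l)}$, $D$ is an invertible diagonal $k\times k$ matrix and $R$ is a $k\times k$ orthogonal matrix. Then $f_V^*$ is equivalent, up to scaling and rotation, to an optimal encoder $f_V'^*$ of $\mathcal{L}^{\rm uni}_{\rm SCL}$, and accordingly their linear probing errors are equal: $\mathcal{E}(f_V^* )=\mathcal{E}(f_V'^* )$.
   Context: Linear probing error of $f:\mathcal{X}_V\to\mathbb{R}^k$ with ground-truth labels $y(x_v)\in\{1,\dots,m\}$: $\mathcal{E}(f)=\min_{B\in\mathbb{R}^{k\times m}}\mathbb{E}_{x_v\sim\mathcal{P}_V}\mathbb{1}[\arg\max_i(f(x_v)^\top B)_i\ne y(x_v)]$. ''Equivalent up to scaling and rotation'' means the embedding matrices with rows $f(x_v)^\top$ (suitably weighted by $\sqrt{\mathcal{P}_V(x_v)}$) differ by right multiplication by an invertible $k\times k$ matrix built from diagonal scalings and orthogonal rotations.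
   Formalization: The dimension k is at most the rank of $\tilde P_M$, so the top-k singular values of $\tilde P_M$ used to build $U^k$ are all positive. The statement above fails without it. *)

From HB Require Import structures.
From mathcomp Require Import all_boot all_order all_algebra.
From mathcomp Require Import boolp classical_sets reals.
Set Implicit Arguments. Unset Strict Implicit. Unset Printing Implicit Defensive.
Import Order.TTheory GRing.Theory Num.Theory.
Local Open Scope ring_scope.
Local Open Scope classical_set_scope.

(* X_V = 'I_n, X_L = 'I_m; the joint distribution P_M is an n x m matrix. *)
Section Defs.
Variables (R : realType) (n m k : nat).

Definition is_joint_distr (PM : 'M[R]_(n, m)) : Prop :=
  (forall x l, 0 <= PM x l) /\ \sum_x \sum_l PM x l = 1.

Definition PV (PM : 'M[R]_(n, m)) (x : 'I_n) : R := \sum_l PM x l.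
Definition PL (PM : 'M[R]_(n, m)) (l : 'I_m) : R := \sum_x PM x l.

Definition Pcond (PM : 'M[R]_(n, m)) (x : 'I_n) (l : 'I_m) : R :=
  PM x l / PL PM l.

Definition PT (PM : 'M[R]_(n, m)) (x x' : 'I_n) : R :=
  \sum_l PL PM l * (Pcond PM x l * Pcond PM x' l).

Definition dotr (u v : 'rV[R]_k) : R := \sum_i u 0 i * v 0 i.

Definition Luni (PM : 'M[R]_(n, m)) (f : 'I_n -> 'rV[R]_k) : R :=
  - 2 * (\sum_x \sum_x' PT PM x x' * dotr (f x) (f x'))
  + \sum_x \sum_x' PV PM x * PV PM x' * (dotr (f x) (f x')) ^+ 2.

Definition Lscl (PM : 'M[R]_(n, m)) (fV : 'I_n -> 'rV[R]_k)
    (fL : 'I_m -> 'rV[R]_k) : R :=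
  - 2 * (\sum_x \sum_l PM x l * dotr (fV x) (fL l))
  + \sum_x \sum_l PV PM x * PL PM l * (dotr (fV x) (fL l)) ^+ 2.

Definition Ptilde (PM : 'M[R]_(n, m)) : 'M[R]_(n, m) :=
  \matrix_(x, l) (PM x l / Num.sqrt (PV PM x * PL PM l)).

Definition top_k_left_singular (A : 'M[R]_(n, m)) (Uk : 'M[R]_(n, k)) : Prop :=
  (k <= n)%N /\
  exists (U : 'M[R]_n) (V : 'M[R]_m) (s : nat -> R),
    U *m U^T = 1%:M /\ V *m V^T = 1%:M /\
    (forall i, 0 <= s i) /\
    (forall i j : nat, (i <= j)%N -> (j < minn n m)%N -> s j <= s i) /\
    A = U *m (\matrix_(i < n, j < m) (if (i : nat) == j then s i else 0))
          *m V^T /\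
    (forall (x : 'I_n) (j : 'I_k) (j' : 'I_n), (j : nat) = j' -> Uk x j = U x j').

Inductive scale_rot : 'M[R]_k -> Prop :=
| sr_diag (d : 'rV[R]_k) : (forall i, d 0 i != 0) -> scale_rot (diag_mx d)
| sr_orth (Q : 'M[R]_k) : Q *m Q^T = 1%:M -> scale_rot Q
| sr_mul (A B : 'M[R]_k) : scale_rot A -> scale_rot B -> scale_rot (A *m B).

Definition emb (PM : 'M[R]_(n, m)) (f : 'I_n -> 'rV[R]_k) : 'M[R]_(n, k) :=
  \matrix_(x, j) (Num.sqrt (PV PM x) * f x 0 j).

(* linear probing with c.+1 classes; arg max with a fixed tie-breaking rule *)
Definition probe_pred (c : nat) (B : 'M[R]_(k, c.+1)) (v : 'rV[R]_k) : 'I_c.+1 :=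
  [arg max_(i > ord0) (v *m B) 0 i]%O.

Definition probe_err (c : nat) (PM : 'M[R]_(n, m)) (y : 'I_n -> 'I_c.+1)
    (f : 'I_n -> 'rV[R]_k) (B : 'M[R]_(k, c.+1)) : R :=
  \sum_x PV PM x * (probe_pred B (f x) != y x)%:R.

Definition lin_probe_error (c : nat) (PM : 'M[R]_(n, m)) (y : 'I_n -> 'I_c.+1)
    (f : 'I_n -> 'rV[R]_k) : R :=
  inf [set e | exists B : 'M[R]_(k, c.+1), e = probe_err PM y f B].

End Defs.

From HB Require Import structures.
From mathcomp Require Import all_boot all_order all_algebra.
From mathcomp Require Import boolp classical_sets reals.
From mathcomp Require Import ring lra.
Import Order.TTheory GRing.Theory Num.Theory.
Local Open Scope ring_scope.

Set Implicit Arguments.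
Unset Strict Implicit.
Unset Printing Implicit Defensive.

(* With G the matrix with rows sqrt(P_V(x)) f(x)^T, the uni-modal loss is
   ||T - G G^T||^2 - ||T||^2 (Frobenius norm), where T = P~ P~^T = U diag(s^2) U^T
   by the singular value decomposition of P~.  Minimisers are therefore best
   rank-k approximations of T: if Q is the orthogonal projection onto the column
   space of U^T G, of trace at most k, then
   ||diag(l) - U^T G G^T U||^2 >= ||(1 - Q) diag(l)||^2 = sum_i l_i^2 (1 - Q_ii),
   and a fractional choice of k indices weighs at most as much as the k largest
   l_i^2.  The truncation U_k diag(s_1, ..., s_k) attains this bound, and f_V^*
   differs from it by the invertible right factor diag(d/s) R, which a linear
   probe can absorb. *)

Section Frobenius.
Variable R : realFieldType.

Definition frob2 p q (X : 'M[R]_(p, q)) : R := \tr (X *m X^T).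

Lemma frob2E p q (X : 'M[R]_(p, q)) : frob2 X = \sum_i \sum_j X i j ^+ 2.
Proof.
apply: eq_bigr => i _; rewrite !mxE.
by apply: eq_bigr => j _; rewrite !mxE expr2.
Qed.

Lemma frob2_ge0 p q (X : 'M[R]_(p, q)) : 0 <= frob2 X.
Proof. by rewrite frob2E; do 2!apply: sumr_ge0 => ? _; apply: sqr_ge0. Qed.

Lemma frob2_eq0 p q (X : 'M[R]_(p, q)) : frob2 X = 0 -> X = 0.
Proof.
have sq_ge0 i j : 0 <= X i j ^+ 2 by apply: sqr_ge0.
rewrite frob2E => /psumr_eq0P row_eq0; apply/matrixP => i j; rewrite mxE.
have /psumr_eq0P Xi_eq0 : \sum_j X i j ^+ 2 = 0.
  by apply: row_eq0 => // i' _; apply: sumr_ge0.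
by apply/eqP; rewrite -sqrf_eq0; apply/eqP/Xi_eq0.
Qed.

Lemma frob2_diag p (l : 'rV[R]_p) : frob2 (diag_mx l) = \sum_i l 0 i ^+ 2.
Proof.
rewrite /frob2 tr_diag_mx mulmx_diag mxtrace_diag.
by apply: eq_bigr => i _; rewrite !mxE expr2.
Qed.

Lemma frob2_conj p q (U : 'M[R]_(p, q)) (X : 'M[R]_q) :
  U^T *m U = 1%:M -> frob2 (U *m X *m U^T) = frob2 X.
Proof.
move=> UtU; rewrite /frob2 !trmx_mul trmxK -!mulmxA (mulmxA U^T U) UtU mul1mx.
by rewrite mxtrace_mulC -!mulmxA UtU mulmx1.
Qed.

Lemma frob2_proj p q (P : 'M[R]_p) (X : 'M[R]_(p, q)) :
  P^T = P -> P *m P = P -> frob2 (P *m X) = \tr (X *m X^T *m P).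
Proof.
move=> PT PP; rewrite /frob2 trmx_mul PT -!mulmxA (mxtrace_mulC P) -!mulmxA PP.
by rewrite !mulmxA.
Qed.

End Frobenius.

Section OrthogonalProjection.
Variable R : realFieldType.

Lemma exists_proj_onto p k (H : 'M[R]_(p, k)) :
  exists Q : 'M[R]_p, [/\ Q^T = Q, Q *m Q = Q, Q *m H = H & \tr Q <= k%:R].
Proof.
have [r [B [B_free HB r_le_k]]] :
    exists r (B : 'M[R]_(r, p)), [/\ row_free B, (H^T <= B)%MS & (r <= k)%N].
  exists (\rank H^T), (row_base H^T).
  by rewrite row_base_free eq_row_base submx_refl rank_leq_row.
set C := B *m B^T.
have C_unit : C \in unitmx.
  rewrite -row_free_unit; apply/inj_row_free => v vC0.
  have /frob2_eq0/eqP : frob2 (v *m B) = 0.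
    by rewrite /frob2 trmx_mul mulmxA -(mulmxA v) vC0 mul0mx linear0.
  by rewrite mulmx_free_eq0 // => /eqP.
have CT : C^T = C by rewrite /C trmx_mul trmxK.
exists (B^T *m invmx C *m B); split.
- by rewrite !trmx_mul trmxK trmx_inv CT mulmxA.
- by rewrite -!mulmxA (mulmxA B) -/C (mulmxA C) mulmxV // mul1mx.
- have -> : H = B^T *m (H^T *m pinvmx B)^T by rewrite -trmx_mul mulmxKpV // trmxK.
  by rewrite -!mulmxA (mulmxA B) -/C (mulmxA (invmx C)) mulVmx // mul1mx.
- by rewrite -mulmxA mxtrace_mulC -mulmxA -/C mulVmx // mxtrace1 ler_nat.
Qed.

Lemma proj_diag_ge0_le1 p (Q : 'M[R]_p) i :
  Q^T = Q -> Q *m Q = Q -> 0 <= Q i i <= 1.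
Proof.
move=> QT QQ.
have Qii : Q i i = \sum_j Q i j ^+ 2.
  by rewrite -{1}QQ mxE; apply: eq_bigr => j _; rewrite -{2}QT mxE expr2.
have Qii_ge0 : 0 <= Q i i by rewrite Qii sumr_ge0 // => j _; apply: sqr_ge0.
have : Q i i ^+ 2 <= Q i i.
  by rewrite [leRHS]Qii (bigD1 i) //= lerDl sumr_ge0 // => j _; apply: sqr_ge0.
by rewrite Qii_ge0 /=; nra.
Qed.

End OrthogonalProjection.

Section LowRankBound.
Variable R : realFieldType.

Lemma frob2_diag_sub_gram_ge p k (l : 'rV[R]_p) (H : 'M[R]_(p, k)) :
  exists q : 'I_p -> R, [/\ forall i, 0 <= q i <= 1, \sum_i q i <= k%:R &
    \sum_i l 0 i ^+ 2 * (1 - q i) <= frob2 (diag_mx l - H *m H^T)].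
Proof.
have [Q [QT QQ QH trQ]] := exists_proj_onto H.
exists (fun i => Q i i); split=> [i | // |]; first exact: proj_diag_ge0_le1.
set X := diag_mx l - H *m H^T; set P := 1%:M - Q.
have PT : P^T = P by rewrite /P linearB /= trmx1 QT.
have PP : P *m P = P by rewrite /P mulmxBl mul1mx mulmxBr mulmx1 QQ subrr subr0.
have frob2X : frob2 X = frob2 (Q *m X) + frob2 (P *m X).
  by rewrite !frob2_proj // -mxtraceD -mulmxDr /P addrC subrK mulmx1.
have PH : P *m H = 0 by rewrite /P mulmxBl mul1mx QH subrr.
have PX : P *m X = P *m diag_mx l by rewrite /X mulmxBr mulmxA PH mul0mx subr0.
have -> : \sum_i l 0 i ^+ 2 * (1 - Q i i) = frob2 (P *m X).
  rewrite PX frob2_proj // tr_diag_mx mulmx_diag mul_diag_mx /mxtrace.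
  by apply: eq_bigr => i _; rewrite !mxE eqxx mulr1n expr2.
by rewrite frob2X lerDr frob2_ge0.
Qed.

Lemma sum_tail_le_weighted p k (mu q : 'I_p -> R) : (k <= p)%N ->
  (forall i, 0 <= mu i) ->
  (forall i j : 'I_p, (i < k)%N -> (k <= j)%N -> mu j <= mu i) ->
  (forall i, 0 <= q i <= 1) -> \sum_i q i <= k%:R ->
  \sum_(i : 'I_p | (k <= i)%N) mu i <= \sum_i mu i * (1 - q i).
Proof.
move=> k_le_p mu_ge0 mu_sorted q01 sum_q.
pose t := \big[Order.max/0]_(i : 'I_p | (k <= i)%N) mu i.
have t_ge0 : 0 <= t by apply: bigmax_ge_id.
have head_ge_t (i : 'I_p) : (i < k)%N -> t <= mu i.
  by move=> ik; apply: bigmax_le => // j; apply: mu_sorted.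
have tail_le_t (i : 'I_p) : (k <= i)%N -> mu i <= t.
  by move=> ki; apply: le_bigmax_cond.
have card_head : \sum_(i < p) (if (i < k)%N then 1 else 0) = k%:R :> R.
  by rewrite -big_mkcond -(big_ord_widen _ (fun=> 1)) // sumr_const card_ord.
have slack_ge0 : 0 <= \sum_(i < p) t * ((if (i < k)%N then 1 else 0) - q i).
  by rewrite -mulr_sumr sumrB card_head mulr_ge0 // subr_ge0.
rewrite big_mkcond -subr_ge0 -sumrB /=; apply: (le_trans slack_ge0).
apply: ler_sum => i _; have /andP[q_ge0 q_le1] := q01 i.
case: ltnP => ik.
- by have := head_ge_t i ik; nra.
- by have := tail_le_t i ik; nra.
Qed.

End LowRankBound.

Section RectDiag.
Variable R : fieldType.

Definition rdiag n m (s : nat -> R) : 'M[R]_(n, m) :=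
  \matrix_(i, j) (if (i : nat) == j then s i else 0).

Definition sqsv n m (s : nat -> R) : 'rV[R]_n :=
  \row_i (if (i < m)%N then s i ^+ 2 else 0).

Lemma rdiag_gram n m (s : nat -> R) :
  rdiag n m s *m (rdiag n m s)^T = diag_mx (sqsv n m s).
Proof.
apply/matrixP => i i'; rewrite !mxE; under eq_bigr => l _ do rewrite !mxE.
case: (ltnP i m) => [im | mi].
- rewrite (bigD1 (Ordinal im)) //= eqxx big1 => [|l /negbTE neq_l]; last first.
    by rewrite -val_eqE /= eq_sym in neq_l; rewrite neq_l mul0r.
  rewrite val_eqE addr0 eq_sym.
  by case: eqVneq => [->|_]; rewrite ?eqxx ?expr2 ?mulr0.
- rewrite big1 ?mul0rn // => l _.
  by rewrite (_ : (i == l :> nat) = false) ?mul0r // gtn_eqF // (leq_trans _ mi).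
Qed.

Lemma pid_mul_diag n k (s : nat -> R) :
  (pid_mx k : 'M[R]_(n, k)) *m diag_mx (\row_(j < k) s j) = rdiag n k s.
Proof.
apply/matrixP => i j; rewrite mul_mx_diag !mxE.
by case: eqP => [->|_]; rewrite ?ltn_ord ?mul1r ?mul0r.
Qed.

Lemma rank_rdiag_le n m (s : nat -> R) j : (j <= n)%N ->
  (forall i, (j <= i)%N -> (i < minn n m)%N -> s i = 0) ->
  (\rank (rdiag n m s) <= j)%N.
Proof.
move=> jn s_tail0.
have -> : rdiag n m s = pid_mx j *m rdiag n m s.
  apply/matrixP => i l; rewrite [RHS]mxE (bigD1 i) //= big1 => [|i' /negbTE neq_i'].
    rewrite !mxE eqxx addr0 /=; case: ltnP => ij; rewrite ?mul1r ?mul0r //.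
    case: eqP => // il; apply: s_tail0 => //.
    by rewrite leq_min ltn_ord il ltn_ord.
  by rewrite mxE val_eqE eq_sym neq_i' mul0r.
by rewrite (leq_trans (mxrankM_maxl _ _)) // rank_pid_mx.
Qed.

Lemma leading_cols_mul_pid n k (U : 'M[R]_n) (Uk : 'M[R]_(n, k)) : (k <= n)%N ->
  (forall x (j : 'I_k) (j' : 'I_n), j = j' :> nat -> Uk x j = U x j') ->
  Uk = U *m pid_mx k.
Proof.
move=> kn Uk_cols; apply/matrixP => x j.
rewrite mxE (bigD1 (widen_ord kn j)) //= big1 => [|i /negbTE neq_i].
  by rewrite !mxE /= eqxx ltn_ord mulr1 addr0; apply: Uk_cols.
by rewrite -val_eqE /= in neq_i; rewrite mxE neq_i mulr0.
Qed.

Lemma gram_svd n m p (A : 'M[R]_(n, m)) (U : 'M[R]_(n, p)) (S : 'M[R]_(p, m))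
    (V : 'M[R]_m) :
  V *m V^T = 1%:M -> A = U *m S *m V^T -> A *m A^T = U *m (S *m S^T) *m U^T.
Proof.
move=> /mulmx1C VtV ->.
by rewrite !trmx_mul trmxK -!mulmxA (mulmxA V^T) VtV mul1mx !mulmxA.
Qed.

End RectDiag.

Section SingularValues.
Variables (R : realFieldType) (n m : nat) (s : nat -> R).
Hypotheses (s_ge0 : forall i, 0 <= s i)
  (s_sorted : forall i j : nat, (i <= j)%N -> (j < minn n m)%N -> s j <= s i).

Lemma svd_sv_neq0 (A : 'M[R]_(n, m)) (U : 'M[R]_n) (V : 'M[R]_m) j :
  A = U *m rdiag n m s *m V^T -> (j < \rank A)%N -> s j != 0.
Proof.
move=> A_svd j_lt_rk; apply/eqP => sj0.
have jn : (j <= n)%N by rewrite ltnW // (leq_trans j_lt_rk) ?rank_leq_row.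
move: j_lt_rk; rewrite ltnNge => /negP; apply.
rewrite A_svd (leq_trans (mxrankM_maxl _ _)) // (leq_trans (mxrankM_maxr _ _)) //.
apply: rank_rdiag_le => // i ji i_lt.
by apply/le_anti; rewrite s_ge0 -sj0 s_sorted.
Qed.

Let lam := sqsv n m s.

Lemma sqsv_ge0 i : 0 <= lam 0 i.
Proof. by rewrite mxE; case: ifP => _; [apply: sqr_ge0 | rewrite lexx]. Qed.

Lemma sqsv_sorted (i j : 'I_n) : (i <= j)%N -> lam 0 j <= lam 0 i.
Proof.
move=> ij; move: (sqsv_ge0 i); rewrite !mxE; case: (ltnP j m) => [jm _ | _ //].
have sji : s j <= s i by rewrite s_sorted // leq_min ltn_ord jm.
by rewrite (leq_ltn_trans ij jm) !expr2 ler_pM ?s_ge0.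
Qed.

Section EckartYoung.
Variable U : 'M[R]_n.
Hypothesis U_orth : U *m U^T = 1%:M.

Lemma frob2_sub_gram_ge k (G : 'M[R]_(n, k)) : (k <= n)%N ->
  \sum_(i : 'I_n | (k <= i)%N) lam 0 i ^+ 2
    <= frob2 (U *m diag_mx lam *m U^T - G *m G^T).
Proof.
move=> kn; have UtU := mulmx1C U_orth.
have -> : U *m diag_mx lam *m U^T - G *m G^T =
    U *m (diag_mx lam - (U^T *m G) *m (U^T *m G)^T) *m U^T.
  rewrite mulmxBr mulmxBl trmx_mul trmxK !mulmxA U_orth mul1mx.
  by rewrite -!mulmxA U_orth mulmx1.
rewrite frob2_conj //.
have [q [q01 sum_q]] := frob2_diag_sub_gram_ge lam (U^T *m G); apply: le_trans.
apply: sum_tail_le_weighted => // [i | i j ik kj]; first exact: sqr_ge0.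
by rewrite !expr2 ler_pM ?sqsv_ge0 ?sqsv_sorted // ltnW // (leq_trans ik kj).
Qed.

Lemma frob2_sub_gram_trunc k : (k <= m)%N ->
  frob2 (U *m diag_mx lam *m U^T - (U *m rdiag n k s) *m (U *m rdiag n k s)^T)
    = \sum_(i : 'I_n | (k <= i)%N) lam 0 i ^+ 2.
Proof.
move=> km; have UtU := mulmx1C U_orth.
rewrite trmx_mul !mulmxA -(mulmxA U (rdiag n k s)) rdiag_gram.
rewrite -mulmxBl -mulmxBr frob2_conj //.
rewrite -linearB /= frob2_diag [RHS]big_mkcond; apply: eq_bigr => i _.
rewrite !mxE; case: (ltnP i k) => ik; last by rewrite subr0.
by rewrite (leq_trans ik km) subrr expr0n.
Qed.

End EckartYoung.
End SingularValues.

Section SpectralLoss.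
Variables (R : realType) (n m k : nat) (PM : 'M[R]_(n, m)).
Hypotheses (PV_gt0 : forall x, 0 < PV PM x) (PL_gt0 : forall l, 0 < PL PM l).

Lemma PT_Ptilde x x' : PT PM x x' =
  Num.sqrt (PV PM x) * Num.sqrt (PV PM x') * (Ptilde PM *m (Ptilde PM)^T) x x'.
Proof.
rewrite !mxE mulr_sumr; apply: eq_bigr => l _; rewrite !mxE /Pcond.
rewrite !sqrtrM ?ltW //.
have a_neq0 : Num.sqrt (PV PM x) != 0 by rewrite gt_eqF ?sqrtr_gt0.
have b_neq0 : Num.sqrt (PV PM x') != 0 by rewrite gt_eqF ?sqrtr_gt0.
have c_neq0 : Num.sqrt (PL PM l) != 0 by rewrite gt_eqF ?sqrtr_gt0.
rewrite -[PL PM l in LHS](@sqr_sqrtr _ (PL PM l)) ?ltW //.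
by field; rewrite a_neq0 b_neq0 c_neq0.
Qed.

Lemma Luni_frob2 (f : 'I_n -> 'rV[R]_k) :
  Luni PM f = frob2 (Ptilde PM *m (Ptilde PM)^T - emb PM f *m (emb PM f)^T)
              - frob2 (Ptilde PM *m (Ptilde PM)^T).
Proof.
rewrite /Luni !frob2E -sumrB mulr_sumr -big_split /=; apply: eq_bigr => x _.
rewrite -sumrB mulr_sumr -big_split /=; apply: eq_bigr => x' _.
have emb_gram : (emb PM f *m (emb PM f)^T) x x' =
    Num.sqrt (PV PM x) * Num.sqrt (PV PM x') * dotr (f x) (f x').
  by rewrite !mxE mulr_sumr; apply: eq_bigr => j _; rewrite !mxE; ring.
rewrite mxE [(- _ : 'M_n) x x']mxE emb_gram PT_Ptilde.
have PVx : PV PM x = Num.sqrt (PV PM x) ^+ 2 by rewrite sqr_sqrtr ?ltW.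
have PVx' : PV PM x' = Num.sqrt (PV PM x') ^+ 2 by rewrite sqr_sqrtr ?ltW.
set a := Num.sqrt (PV PM x) in PVx *; set b := Num.sqrt (PV PM x') in PVx' *.
by rewrite PVx PVx'; ring.
Qed.

Definition enc (G : 'M[R]_(n, k)) (x : 'I_n) : 'rV[R]_k :=
  (Num.sqrt (PV PM x))^-1 *: row x G.

Lemma emb_enc G : emb PM (enc G) = G.
Proof.
apply/matrixP => x j; rewrite !mxE mulrA mulfV ?mul1r //.
by rewrite gt_eqF ?sqrtr_gt0.
Qed.

Lemma enc_mulmx G (M : 'M[R]_k) x : enc (G *m M) x = enc G x *m M.
Proof. by rewrite /enc row_mul scalemxAl. Qed.

Lemma emb_mulmx (f : 'I_n -> 'rV[R]_k) (M : 'M[R]_k) :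
  emb PM (fun x => f x *m M) = emb PM f *m M.
Proof.
apply/matrixP => x j; rewrite !mxE mulr_sumr.
by apply: eq_bigr => i _; rewrite !mxE mulrA.
Qed.

End SpectralLoss.

Lemma scale_rot_unitmx (R : realType) k (M : 'M[R]_k) : scale_rot M -> M \in unitmx.
Proof.
elim=> [d d_neq0 | Q /mulmx1_unit[] // | A B _ A_unit _ B_unit].
- by rewrite unitmxE det_diag unitfE; apply/prodf_neq0.
- by rewrite unitmx_mul A_unit.
Qed.

Section LinearProbe.
Variables (R : realType) (n m k c : nat) (PM : 'M[R]_(n, m)) (y : 'I_n -> 'I_c.+1).

Lemma probe_err_mulmx (f : 'I_n -> 'rV[R]_k) (M : 'M[R]_k) B :
  probe_err PM y (fun x => f x *m M) B = probe_err PM y f (M *m B).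
Proof. by apply: eq_bigr => x _; rewrite /probe_pred mulmxA. Qed.

Lemma lin_probe_error_mulmx (f : 'I_n -> 'rV[R]_k) (M : 'M[R]_k) :
  M \in unitmx -> lin_probe_error PM y (fun x => f x *m M) = lin_probe_error PM y f.
Proof.
move=> M_unit; rewrite /lin_probe_error; congr inf.
apply/seteqP; split => e [B ->]; first by exists (M *m B); rewrite probe_err_mulmx.
by exists (invmx M *m B); rewrite probe_err_mulmx mulmxA mulmxV ?mul1mx.
Qed.

End LinearProbe.

Theorem theorem4p1 (R : realType) (n m k c : nat) (PM : 'M[R]_(n, m))
  (y : 'I_n -> 'I_c.+1)
  (fV : 'I_n -> 'rV[R]_k) (Uk : 'M[R]_(n, k)) (d : 'rV[R]_k) (Rm : 'M[R]_k) :
  is_joint_distr PM ->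
  (forall x, 0 < PV PM x) ->
  (forall l, 0 < PL PM l) ->
  (k <= \rank (Ptilde PM))%N ->
  (exists fL : 'I_m -> 'rV[R]_k,
     forall (gV : 'I_n -> 'rV[R]_k) (gL : 'I_m -> 'rV[R]_k),
       Lscl PM fV fL <= Lscl PM gV gL) ->
  top_k_left_singular (Ptilde PM) Uk ->
  (forall i, d 0 i != 0) ->
  Rm *m Rm^T = 1%:M ->
  (forall x, fV x = (Num.sqrt (PV PM x))^-1 *: (row x Uk *m diag_mx d *m Rm)) ->
  exists fV' : 'I_n -> 'rV[R]_k,
    (forall g : 'I_n -> 'rV[R]_k, Luni PM fV' <= Luni PM g) /\
    (exists M : 'M[R]_k, scale_rot M /\ emb PM fV = emb PM fV' *m M) /\
    lin_probe_error PM y fV = lin_probe_error PM y fV'.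
Proof.
move=> _ PV_gt0 PL_gt0 k_le_rank _ [k_le_n [U [V [s [U_orth [V_orth
  [s_ge0 [s_sorted [A_svd Uk_cols]]]]]]]]] d_neq0 Rm_orth fV_def.
have k_le_m : (k <= m)%N := leq_trans k_le_rank (rank_leq_col _).
have s_neq0 (j : 'I_k) : s j != 0.
  apply: (svd_sv_neq0 s_ge0 s_sorted A_svd).
  exact: leq_trans (ltn_ord j) k_le_rank.
pose G := U *m rdiag n k s.
pose M := diag_mx (\row_j (d 0 j / s j)) *m Rm.
have M_sr : scale_rot M.
  apply: sr_mul (sr_orth Rm_orth); apply: sr_diag => j.
  by rewrite mxE mulf_neq0 ?invr_eq0.
have fV_M : fV = fun x => enc PM G x *m M.
  have GM : G *m M = Uk *m diag_mx d *m Rm.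
    rewrite /G /M -pid_mul_diag (mulmxA U) -(leading_cols_mul_pid k_le_n Uk_cols).
    rewrite mulmxA -(mulmxA Uk) mulmx_diag.
    by congr (_ *m diag_mx _ *m _); apply/rowP => j; rewrite !mxE mulrC divfK.
  by apply/funext => x; rewrite -enc_mulmx GM fV_def /enc -!row_mul.
exists (enc PM G); split; [|split].
- move=> g; rewrite !Luni_frob2 // lerD2r emb_enc // (gram_svd V_orth A_svd).
  by rewrite rdiag_gram frob2_sub_gram_trunc // frob2_sub_gram_ge.
- by exists M; rewrite fV_M emb_mulmx.
- by rewrite fV_M lin_probe_error_mulmx // scale_rot_unitmx.
Qed.
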